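(* Let $F/{\mathbf Q}$ be a totally real Galois extension of degree $2^d$. Suppose there is $\alpha\in F$ with $\operatorname{N}_{F/{\mathbf Q}}(\alpha)<0$ such that the ideal $(\alpha)$ is fixed by $\operatorname{Gal}(F/{\mathbf Q})$. Then for every assignment of signs $\pm1$ to the $2^d$ real embeddings of $F$ whose product is $1$, there is a unit of $\mathcal O_F$ whose signs under the real embeddings are exactly the given ones. *)

From HB Require Import structures.
From mathcomp Require Import all_boot all_order all_algebra all_fingroup all_field.
Set Implicit Arguments. Unset Strict Implicit. Unset Printing Implicit Defensive.
Import GRing.Theory Num.Theory.
Local Open Scope ring_scope.

Definition integral (L : fieldExtType rat) (x : L) : Prop :=
  exists p : {poly int}, p \is monic /\ root (map_poly (fun z : int => z%:~R : L) p) x.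

Definition OK_unit (L : fieldExtType rat) (x : L) : Prop :=
  x != 0 /\ integral x /\ integral x^-1.

(* the principal (fractional) ideal a O_L, as a subset of L *)
Definition pideal (L : fieldExtType rat) (a : L) : L -> Prop :=
  fun y => exists x, integral x /\ y = a * x.

From HB Require Import structures.
From mathcomp Require Import all_boot all_order all_algebra all_fingroup all_field.
From mathcomp Require Import pgroup sylow.
Import Order.TTheory GRing.Theory Num.Theory.
Local Open Scope ring_scope.

(* Let G be the Galois group, a 2-group, and record the signs of a nonzero x
   under the embeddings iota \o s (s in G) as a vector in F_2^G.  As the ideal
   (alpha) is G-stable, every t(alpha)/alpha is a unit, and its sign vector is
   s |-> v(ts) + v(s), where v is the sign vector of alpha.  Hence the product
   of these units over t in a set A of even size has sign vector a v, a product
   in the group algebra F_2[G] with a the indicator of A.  Since N(alpha) < 0,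
   v has augmentation 1, and then multiplication by v is injective: G acts on
   its kernel by translation with 0 as the only fixed point, so the kernel has
   odd order, while being an F_2-space.  So multiplication by v maps the
   augmentation ideal, i.e. the sign vectors with product 1, onto itself. *)

Lemma Z2_addxx (z : 'Z_2) : z + z = 0.
Proof. by apply/val_inj; case: z => [[|[|//]]]. Qed.

Lemma Z2_cases (z : 'Z_2) : z = 0 \/ z = 1.
Proof. by case: z => [[|[|//]]] ? /=; [left|right]; apply/val_inj. Qed.

Lemma sum_Z2_support (T : finType) (a F : T -> 'Z_2) :
  \sum_(t | a t == 1) F t = \sum_t a t * F t.
Proof.
by rewrite big_mkcond; apply: eq_bigr => t _; case: (Z2_cases (a t)) => ->;
  rewrite ?mul0r ?mul1r.
Qed.

Lemma card_even_of_addr_stable (T : finType) (K : {set {ffun T -> 'Z_2}})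
    (a : {ffun T -> 'Z_2}) :
  a != 0 -> {in K, forall x, x + a \in K} -> ~~ odd #|K|.
Proof.
move=> nz_a addaK.
have [t0 a_t0] : exists t0, a t0 = 1.
  have [t0 nz_at0] : exists t0, a t0 != 0.
    apply/existsP; apply: contraR nz_a; rewrite negb_exists => /forallP a0.
    by apply/eqP/ffunP=> t; rewrite ffunE; apply/eqP/negbNE/a0.
  by exists t0; case: (Z2_cases (a t0)) nz_at0 => -> //; rewrite eqxx.
pose K0 := [set x in K | x t0 == 0].
have K0_img : (fun x : {ffun T -> 'Z_2} => x + a) @: K0 = K :\: K0.
  apply/setP=> y; rewrite !inE; apply/imsetP/idP.
    case=> x; rewrite inE => /andP[Kx /eqP x_t0] ->.
    by rewrite addaK // ffunE x_t0 a_t0 add0r andbT.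
  case/andP=> y_t0 Ky; exists (y + a); last first.
    by apply/ffunP=> u; rewrite !ffunE -addrA Z2_addxx addr0.
  rewrite inE addaK //= ffunE a_t0.
  by case: (Z2_cases (y t0)) y_t0 => ->; rewrite Ky.
rewrite -(cardsID K0 K) -K0_img card_imset; last exact: addIr.
have /setIidPr -> : K0 \subset K by apply/subsetP=> x; rewrite inE => /andP[].
by rewrite addnn odd_double.
Qed.

Section GroupAlgebraZ2.

Context {gT : finGroupType}.
Implicit Types (v a f x : {ffun gT -> 'Z_2}) (g s t : gT).

(* [gconv v a] lists the coefficients of (\sum_t a t * t^-1) * (\sum_u v u * u)
   in the group algebra F_2[gT]. *)
Definition gconv v a : {ffun gT -> 'Z_2} := [ffun s => \sum_t a t * v (t * s)%g].

Lemma gconvD v : {morph gconv v : a b / a + b}.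
Proof.
move=> a b; apply/ffunP=> s; rewrite !ffunE -big_split.
by apply: eq_bigr => t _; rewrite ffunE mulrDl.
Qed.

Lemma gconvB v : {morph gconv v : a b / a - b}.
Proof.
move=> a b; apply/ffunP=> s; rewrite !ffunE -sumrB.
by apply: eq_bigr => t _; rewrite !ffunE mulrBl.
Qed.

Lemma gconv_cst v c : gconv v [ffun=> c] = [ffun=> c * \sum_t v t].
Proof.
apply/ffunP=> s; rewrite !ffunE mulr_sumr [RHS](reindex_inj (mulIg s)) /=.
by apply: eq_bigr => t _; rewrite ffunE.
Qed.

Lemma sum_gconv v a : \sum_s gconv v a s = (\sum_t a t) * \sum_t v t.
Proof.
under eq_bigr => s _ do rewrite ffunE.
rewrite exchange_big mulr_suml; apply: eq_bigr => t _.
by rewrite -mulr_sumr; congr (_ * _); rewrite [RHS](reindex_inj (mulgI t)).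
Qed.

Definition rtrans x g : {ffun gT -> 'Z_2} := [ffun u => x (u * g^-1)%g].

Lemma rtrans1 : rtrans^~ 1%g =1 id.
Proof. by move=> x; apply/ffunP=> u; rewrite ffunE invg1 mulg1. Qed.

Lemma rtransM x : act_morph rtrans x.
Proof. by move=> g h; apply/ffunP=> u; rewrite !ffunE invMg mulgA. Qed.

Definition rtrans_action := TotalAction rtrans1 rtransM.

Lemma gconv_rtrans v x g s : gconv v (rtrans x g) s = gconv v x (g * s)%g.
Proof.
rewrite !ffunE (reindex_inj (mulIg g)) /=.
by apply: eq_bigr => t _; rewrite ffunE mulgK mulgA.
Qed.

Lemma rtrans_fixed_cst x : (forall g, rtrans x g = x) -> x = [ffun=> x 1%g].
Proof.
move=> fix_x; apply/ffunP=> u; rewrite ffunE.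
have := congr1 (fun y : {ffun gT -> 'Z_2} => y 1%g) (fix_x u^-1%g).
by rewrite /= ffunE invgK mul1g.
Qed.

Context {v : {ffun gT -> 'Z_2}}.
Hypotheses (sum_v : \sum_t v t = 1) (pG : (2.-group [set: gT])%g).

Lemma odd_card_ker_gconv : odd #|[set x | gconv v x == 0]|.
Proof.
set K := [set x | _].
have actsK : [acts [set: gT], on K | rtrans_action].
  apply/actsP=> g _ x; rewrite !inE /=; apply/eqP/eqP=> ker_x; apply/ffunP=> s.
    have := congr1 (fun y : {ffun gT -> 'Z_2} => y (g^-1 * s)%g) ker_x.
    by rewrite /= gconv_rtrans mulKVg !ffunE.
  by rewrite gconv_rtrans ker_x !ffunE.
have fixK : ('Fix_(K | rtrans_action)([set: gT]))%g = [set 0 : {ffun gT -> 'Z_2}].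
  apply/setP=> x; rewrite !inE; apply/andP/eqP => [[/eqP Kx /subsetP fix_x] | ->].
    have x_cst : x = [ffun=> x 1%g].
      by apply: rtrans_fixed_cst => g; have /[!inE] /eqP := fix_x g (in_setT g).
    move: Kx; rewrite x_cst gconv_cst sum_v mulr1 => /ffunP/(_ 1%g); rewrite !ffunE => x1.
    by apply/ffunP=> u; rewrite !ffunE.
  split; first by rewrite -[0]/([ffun=> 0 : 'Z_2]) gconv_cst mul0r.
  by apply/subsetP=> g _; rewrite inE; apply/eqP/ffunP=> u; rewrite !ffunE.
by have := pgroup_fix_mod pG actsK; rewrite fixK cards1 modn2; case: odd.
Qed.

Lemma gconv_inj : injective (gconv v).
Proof.
move=> a b eq_ab; apply/eqP; rewrite -subr_eq0; apply: contraTT odd_card_ker_gconv.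
move=> nz_ab; apply: card_even_of_addr_stable nz_ab _ => x.
by rewrite !inE gconvD gconvB eq_ab subrr => /eqP ->; rewrite addr0.
Qed.

Lemma gconv_sum0_surj f :
  \sum_t f t = 0 -> exists2 a : {ffun gT -> 'Z_2}, \sum_t a t = 0 & gconv v a = f.
Proof.
pose E := [set a : {ffun gT -> 'Z_2} | \sum_t a t == 0].
have gconvE : gconv v @: E = E.
  apply/eqP; rewrite eqEcard (card_imset _ gconv_inj) leqnn andbT.
  apply/subsetP=> _ /imsetP[a Ea ->]; move: Ea.
  by rewrite !inE sum_gconv => /eqP->; rewrite mul0r.
move=> sum_f; have : f \in E by rewrite inE sum_f.
by rewrite -gconvE => /imsetP[a]; rewrite inE => /eqP sum_a ->; exists a.
Qed.

End GroupAlgebraZ2.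

Section SignBit.

Context {R : numFieldType}.
Implicit Types x y : R.

Definition sign_bit x : 'Z_2 := if x < 0 then 1 else 0.

Lemma sign_bitM x y : x \is Num.real -> y \is Num.real -> x != 0 -> y != 0 ->
  sign_bit (x * y) = sign_bit x + sign_bit y.
Proof.
move=> rx ry; rewrite /sign_bit !real_neqr_lt ?real0 //.
move=> /orP[x_lt0|x_gt0] /orP[y_lt0|y_gt0].
- by rewrite (nmulr_rlt0 _ x_lt0) x_lt0 y_lt0 (lt_gtF y_lt0) /= Z2_addxx.
- by rewrite (nmulr_rlt0 _ x_lt0) x_lt0 y_gt0 (lt_gtF y_gt0) addr0.
- by rewrite (pmulr_rlt0 _ x_gt0) y_lt0 (lt_gtF x_gt0) add0r.
- by rewrite (pmulr_rlt0 _ x_gt0) (lt_gtF x_gt0) (lt_gtF y_gt0) addr0.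
Qed.

Lemma sign_bitV x : sign_bit x^-1 = sign_bit x.
Proof. by rewrite /sign_bit invr_lt0. Qed.

Lemma sign_bit_prod (I : Type) (r : seq I) (P : pred I) (F : I -> R) :
  (forall i, P i -> F i \is Num.real /\ F i != 0) ->
  sign_bit (\prod_(i <- r | P i) F i) = \sum_(i <- r | P i) sign_bit (F i).
Proof.
move=> realF.
suff /and3P[_ _ /eqP //] : [&& \prod_(i <- r | P i) F i \is Num.real,
    \prod_(i <- r | P i) F i != 0 &
    sign_bit (\prod_(i <- r | P i) F i) == \sum_(i <- r | P i) sign_bit (F i)].
apply: (big_rec2 (fun p b => [&& p \is Num.real, p != 0 & sign_bit p == b])).
  by rewrite real1 oner_eq0 /sign_bit ltr10.
move=> i p b Pi /and3P[rp nz_p /eqP <-]; have [rFi nz_Fi] := realF i Pi.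
by rewrite rpredM ?mulf_neq0 //= sign_bitM.
Qed.

Lemma sum_sign_bit_intr (I : finType) (e : I -> int) : (forall i, e i != 0) ->
  \sum_i sign_bit ((e i)%:~R : R) = sign_bit ((\prod_i e i)%:~R : R).
Proof.
by move=> nz_e; rewrite rmorph_prod sign_bit_prod // => i _; rewrite realz intr_eq0.
Qed.

Lemma sg_sign_bit x y : x \is Num.real -> y \is Num.real -> x != 0 -> y != 0 ->
  sign_bit x = sign_bit y -> Num.sg x = Num.sg y.
Proof.
move=> rx ry; rewrite /sign_bit !real_neqr_lt ?real0 //.
move=> /orP[x_lt0|x_gt0] /orP[y_lt0|y_gt0].
- by rewrite !ltr0_sg.
- by rewrite x_lt0 (lt_gtF y_gt0) => /(congr1 val).
- by rewrite y_lt0 (lt_gtF x_gt0) => /(congr1 val).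
- by rewrite !gtr0_sg.
Qed.

End SignBit.

Lemma integral1 (L : fieldExtType rat) : integral (1 : L).
Proof.
exists ('X - 1); split; first by rewrite monicXsubC.
by rewrite rmorphB /= map_polyX map_polyC /= rmorph1 root_XsubC.
Qed.

Lemma pideal_refl (L : fieldExtType rat) (a : L) : pideal a a.
Proof. by exists 1; split; [exact: integral1 | rewrite mulr1]. Qed.

Lemma OK_unit_div_of_pideal_eq (L : fieldExtType rat) (a b : L) :
  a != 0 -> b != 0 -> (forall y, pideal a y <-> pideal b y) -> OK_unit (a / b).
Proof.
move=> nz_a nz_b eq_ab.
have [x [int_x a_bx]] : pideal b a by apply/eq_ab/pideal_refl.
have [y [int_y b_ay]] : pideal a b by apply/eq_ab/pideal_refl.
split; first by rewrite mulf_neq0 ?invr_eq0.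
rewrite invf_div.
have -> : a / b = x by rewrite a_bx mulrC mulKf.
have -> : b / a = y by rewrite b_ay mulrC mulKf.
by split.
Qed.

Section AlgebraicIntegers.

Context {L : fieldExtType rat} (iota : {rmorphism L -> algC}).
Implicit Types x y z : L.

Lemma integral_Aint z : integral z <-> iota z \in Aint.
Proof.
split.
  case=> p [mp rp]; apply: (@root_monic_Aint (map_poly intr p)).
  - have := rmorph_root iota rp; rewrite -map_poly_comp.
    by rewrite (eq_map_poly (rmorph_int iota)).
  - by rewrite monicE lead_coef_map_inj ?(monicP mp) //; exact: intr_inj.
  - by apply/polyOverP=> i; rewrite coef_map /= intr_int.
move=> Az; have [q Dq] := floorpP Az.
exists q; split.
  have := minCpoly_monic (iota z).
  rewrite Dq monicE lead_coef_map_inj //; last exact: intr_inj.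
  by rewrite monicE -(eqr_int algC).
apply/rootP/eqP; rewrite -(fmorph_eq0 iota) -horner_map /= -map_poly_comp.
rewrite (eq_map_poly (rmorph_int iota)) -Dq.
exact: root_minCpoly.
Qed.

Lemma integralM x y : integral x -> integral y -> integral (x * y).
Proof.
move=> /integral_Aint Ax /integral_Aint Ay.
by apply/integral_Aint; rewrite rmorphM rpredM.
Qed.

Lemma OK_unitM x y : OK_unit x -> OK_unit y -> OK_unit (x * y).
Proof.
move=> [nz_x [int_x int_xV]] [nz_y [int_y int_yV]].
by split; [rewrite mulf_neq0 | rewrite invfM; split; apply: integralM].
Qed.

Lemma OK_unit_prod (I : Type) (r : seq I) (P : pred I) (F : I -> L) :
  (forall i, P i -> OK_unit (F i)) -> OK_unit (\prod_(i <- r | P i) F i).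
Proof.
move=> unitF; apply: big_ind => //; last exact: OK_unitM.
by split; [exact: oner_neq0 | rewrite invr1; split; exact: integral1].
Qed.

End AlgebraicIntegers.

Lemma Gal_setT (L : splittingFieldType rat) :
  'Gal({:L} / 1%VS)%g = [set: gal_of {:L}].
Proof. by apply/setP=> s; rewrite inE gal_kAut ?sub1v // kAut1E subvf. Qed.

Lemma big_Gal_full (L : splittingFieldType rat) (R : Type) (idx : R) op
    (F : gal_of {:L} -> R) :
  \big[op/idx]_(s in 'Gal({:L} / 1%VS)%g) F s = \big[op/idx]_s F s.
Proof. by apply: eq_bigl => s; rewrite Gal_setT inE. Qed.

Lemma galois_dim_pgroup {L : splittingFieldType rat} {p d : nat} :
  prime p -> galois 1%VS {:L} -> \dim {:L} = (p ^ d)%N ->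
  (p.-group [set: gal_of {:L}])%g.
Proof.
move=> p_pr galL dimL; have := galois_dim galL.
by rewrite /= dimv1 divn1 dimL Gal_setT /pgroup => <-; rewrite pnatX pnat_id.
Qed.

Section SignVectors.

Context {L : splittingFieldType rat} (iota : {rmorphism L -> algC}).
Hypothesis totally_real : forall (f : {rmorphism L -> algC}) (x : L), f x \is Num.real.
Implicit Types (x : L) (s t : gal_of {:L}).

Definition sign_vector x : {ffun gal_of {:L} -> 'Z_2} :=
  [ffun s : gal_of {:L} => sign_bit (iota (s x))].

Lemma conj_real_neq0 s {x} : x != 0 -> iota (s x) \is Num.real /\ iota (s x) != 0.
Proof.
by move=> nz_x; split; [exact: (totally_real (iota \o s)) | rewrite !fmorph_eq0].
Qed.

Lemma sign_vector_prod (I : Type) (r : seq I) (P : pred I) (F : I -> L) :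
    (forall i, P i -> F i != 0) ->
  sign_vector (\prod_(i <- r | P i) F i) = \sum_(i <- r | P i) sign_vector (F i).
Proof.
move=> nzF; apply/ffunP=> s; rewrite ffunE sum_ffunE !rmorph_prod.
(* plain [exact]: the two coercions of [s] to a function agree only up to conversion *)
rewrite sign_bit_prod => [|i Pi]; last exact (conj_real_neq0 s (nzF i Pi)).
by apply: eq_bigr => i _; rewrite ffunE.
Qed.

Lemma sign_vector_norm x : x != 0 ->
  \sum_s sign_vector x s = sign_bit (iota (galNorm 1%VS {:L} x)).
Proof.
move=> nz_x; rewrite /galNorm big_Gal_full rmorph_prod sign_bit_prod => [|s _].
  by apply: eq_bigr => s _; rewrite ffunE.
exact: conj_real_neq0.
Qed.

Lemma sign_vector_conj_ratio t x s : x != 0 ->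
  sign_vector (t x / x) s = sign_vector x (t * s)%g + sign_vector x s.
Proof.
move=> nz_x; have nz_tx : t x != 0 by rewrite fmorph_eq0.
have [r_tx nz_itx] := conj_real_neq0 s nz_tx; have [r_x nz_ix] := conj_real_neq0 s nz_x.
rewrite !ffunE !fmorph_div sign_bitM ?rpredV ?invr_eq0 // sign_bitV.
by rewrite (galM _ _ (memvf x)).
Qed.

Lemma sign_vector_ratio_prod x (a : {ffun gal_of {:L} -> 'Z_2}) :
    x != 0 -> \sum_t a t = 0 ->
  sign_vector (\prod_(t | a t == 1) (t x / x)) = gconv (sign_vector x) a.
Proof.
move=> nz_x sum_a; rewrite sign_vector_prod => [|t _]; last first.
  by rewrite mulf_neq0 ?invr_eq0 ?fmorph_eq0.
apply/ffunP=> s; rewrite sum_ffunE sum_Z2_support ffunE.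
under eq_bigr => t _ do rewrite sign_vector_conj_ratio // mulrDr.
by rewrite big_split /= -mulr_suml sum_a mul0r addr0.
Qed.

End SignVectors.

Theorem lemma3p15 (L : splittingFieldType rat) (d : nat)
  (Hgal : galois 1%VS {:L})
  (Hdeg : \dim {:L} = (2 ^ d)%N)
  (Htr : forall (f : {rmorphism L -> algC}) (x : L), f x \is Num.real)
  (alpha : L)
  (Hnorm : exists r : rat, r < 0 /\ galNorm 1%VS {:L} alpha = r%:A)
  (Hfix : forall s, s \in 'Gal({:L} / 1%VS)%g ->
            forall y : L, pideal (s alpha) y <-> pideal alpha y)
  (iota : {rmorphism L -> algC})
  (sgn : gal_of {:L} -> int)
  (Hsgn : forall s, s \in 'Gal({:L} / 1%VS)%g -> sgn s = 1 \/ sgn s = -1)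
  (Hprod : \prod_(s in 'Gal({:L} / 1%VS)%g) sgn s = 1) :
  exists u : L, OK_unit u /\
    forall s, s \in 'Gal({:L} / 1%VS)%g -> Num.sg (iota (s u)) = (sgn s)%:~R.
Proof.
have Gal_all s : s \in 'Gal({:L} / 1%VS)%g by rewrite Gal_setT inE.
have nz_sgn s : sgn s != 0 by case: (Hsgn s (Gal_all s)) => ->.
have [r [r_lt0 norm_alpha]] := Hnorm.
have nz_alpha : alpha != 0.
  by rewrite -(galNorm_eq0 1%VS {:L}) norm_alpha scaler_eq0 oner_eq0 orbF ltr0_neq0.
have sum_v : \sum_s sign_vector iota alpha s = 1.
  rewrite (sign_vector_norm iota Htr) // norm_alpha alg_num_field fmorph_rat.
  by rewrite /sign_bit ltrq0 r_lt0.
pose f : {ffun gal_of {:L} -> 'Z_2} := [ffun s => sign_bit ((sgn s)%:~R : algC)].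
have sum_f : \sum_s f s = 0.
  under eq_bigr => s _ do rewrite ffunE.
  by rewrite sum_sign_bit_intr // -big_Gal_full Hprod /sign_bit ltr10.
have pG := galois_dim_pgroup (isT : prime 2) Hgal Hdeg.
have [a sum_a gconv_a] := gconv_sum0_surj sum_v pG f sum_f.
pose u := \prod_(t | a t == 1) (t alpha / alpha).
have unit_u : OK_unit u.
  apply: (OK_unit_prod iota) => t _.
  by apply: OK_unit_div_of_pideal_eq; rewrite ?fmorph_eq0 // => y; apply: Hfix.
exists u; split=> // s _.
have [r_u nz_u] := conj_real_neq0 iota Htr s unit_u.1.
have /ffunP/(_ s) := sign_vector_ratio_prod iota Htr alpha a nz_alpha sum_a.
rewrite gconv_a !ffunE => /sg_sign_bit -> //; rewrite ?realz ?intr_eq0 ?nz_sgn //.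
by case: (Hsgn s (Gal_all s)) => ->; rewrite ?rmorphN1 ?sgrN1 ?sgr1.
Qed.
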